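(* Let $U$ be a coherent $P$-ultrafilter on $\mathbb{C}_\omega$ such that $a_i\notin U$ for all $i<\omega$. Then for every monotonic function $g\colon U\to\mathbb{C}_\omega$ there exist $x\in U$, a strictly increasing function $\varphi\colon\omega\to\omega$, and a monotonic function $g^*\colon C_\varphi\to\mathbb{C}_\omega$ represented by a basic map such that $g^*(c)=g(c)$ for every $c\in C_\varphi\cap U$ with $c\le x$.
   Context: $\mathbb{C}_\omega$ is the Cohen algebra, the unique atomless complete Boolean algebra with a countable dense subalgebra. Fix an enumeration $\{d_k:k<\omega\}$ of a countable dense subalgebra with $d_0=\mathbb{0}$, and fix an infinite maximal antichain $\{a_i:i<\omega\}$. For strictly increasing $\varphi\colon\omega\to\omega$, $C_\varphi$ is the set of $c\in\mathbb{C}_\omega$ for which there is a strictly increasing sequence $\langle m_j\rangle$ with $\{a_i\wedge c: i<\varphi(m_j)\}\subseteq\{d_k:k<\varphi(m_j)\}$ for all $j$. For $c\in\mathbb{C}_\omega$, $\ell<\omega$, $c^\ell=\bigvee\{a_i\wedge c:i<\ell\}\vee\bigvee\{a_i:i\ge\ell\}$. For $C\subseteq\mathbb{C}_\omega$, $f\colon C\to\mathbb{C}_\omega$ is represented by a basic map if there is $\hat f\colon\{c^\ell:c\in C,\ell<\omega\}\to\mathbb{C}_\omega$ with $f(c)=\bigwedge\{\hat f(c^\ell):\ell<\omega\}$ for all $c\in C$. A function $g$ between subsets of Boolean algebras is monotonic if $v_1\le v_2$ implies $g(v_1)\le g(v_2)$. An ultrafilter $U$ on a complete c.c.c. Boolean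 algebra is a coherent $P$-ultrafilter if for every maximal antichain $P$ and every family $\{X_n:n<\omega\}$ of subsets of $P$ with all $\bigvee X_n\in U$, there is $Y\subseteq P$ with $\bigvee Y\in U$ and $Y\setminus X_n$ finite for all $n$. *)

(* a Boolean algebra is a ctbDistrLatticeType
   (complemented distributive lattice with top and bottom). *)
From HB Require Import structures.
From mathcomp Require Import all_boot all_order.
From mathcomp Require Import boolp classical_sets cardinality.
Set Implicit Arguments. Unset Strict Implicit. Unset Printing Implicit Defensive.
Import Order.TTheory.
Local Open Scope classical_set_scope.
Local Open Scope order_scope.

Section BA.
Context {disp : Order.disp_t} {T : ctbDistrLatticeType disp}.

Definition is_lub (X : set T) (s : T) :=
  (forall x, X x -> x <= s) /\ (forall u, (forall x, X x -> x <= u) -> s <= u).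
Definition is_glb (X : set T) (s : T) :=
  (forall x, X x -> s <= x) /\ (forall u, (forall x, X x -> u <= x) -> u <= s).

(* \bigvee X and \bigwedge X (meaningful in a complete algebra) *)
Definition bsup (X : set T) : T := xget \bot [set s | is_lub X s].
Definition binf (X : set T) : T := xget \top [set s | is_glb X s].

Definition complete_BA := forall X : set T, exists s, is_lub X s.
Definition atomless_BA :=
  forall a : T, a != \bot -> exists b : T, (\bot < b) && (b < a).

Definition subalgebra_enum (d : nat -> T) :=
  [/\ exists k, d k = \bot, exists k, d k = \top,
      forall i j, exists k, d k = Order.meet (d i) (d j),
      forall i j, exists k, d k = Order.join (d i) (d j) &
      forall i, exists k, d k = Order.compl (d i)].
Definition dense_enum (d : nat -> T) :=
  forall a : T, a != \bot -> exists k, (\bot < d k) && (d k <= a).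

Definition antichain (P : set T) :=
  (forall p, P p -> p != \bot) /\
  (forall p q, P p -> P q -> p != q -> Order.meet p q = \bot).
Definition maximal_antichain (P : set T) :=
  antichain P /\ (forall b, b != \bot -> exists2 p, P p & Order.meet b p != \bot).

Definition ultrafilter (U : set T) :=
  [/\ U \top, ~ U \bot, (forall x y, U x -> x <= y -> U y),
      (forall x y, U x -> U y -> U (Order.meet x y)) &
      (forall x, U x \/ U (Order.compl x))].

Definition coherent_P_ultrafilter (U : set T) :=
  ultrafilter U /\
  forall (P : set T) (X : nat -> set T),
    maximal_antichain P ->
    (forall n, X n `<=` P) -> (forall n, U (bsup (X n))) ->
    exists2 Y : set T, Y `<=` P /\ U (bsup Y) &
      forall n, finite_set (Y `\` X n).

Definition C_phi (d a : nat -> T) (phi : nat -> nat) : set T :=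
  [set c | exists m : nat -> nat, (forall j, m j < m j.+1)%N /\
     forall j i, (i < phi (m j))%N -> exists2 k, (k < phi (m j))%N & d k = Order.meet (a i) c].

Definition cup (a : nat -> T) (c : T) (l : nat) : T :=
  Order.join (\big[Order.join/Order.bottom]_(i < l) Order.meet (a i) c) (bsup [set a i | i in [set i | (l <= i)%N]]).

(* f : C -> T (given as a total function, only its values on C matter)
   is represented by a basic map *)
Definition basic_rep (a : nat -> T) (C : set T) (f : T -> T) :=
  exists fhat : T -> T,
    forall c, C c -> f c = binf [set fhat (cup a c l) | l in [set: nat]].

Definition monotonic_on (C : set T) (g : T -> T) :=
  forall v1 v2, C v1 -> C v2 -> v1 <= v2 -> g v1 <= g v2.

End BA.

From HB Require Import structures.
From mathcomp Require Import all_boot all_order.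
From mathcomp Require Import boolp classical_sets cardinality.
Import Order.TTheory Order.Theory.
Local Open Scope classical_set_scope.
Local Open Scope order_scope.
Set Implicit Arguments. Unset Strict Implicit. Unset Printing Implicit Defensive.

(* Let t_n = \bigvee {a_i : i >= n} (the "tail" of the antichain a).

   1. Since U contains no a_i, it contains no finite join of them, so every
      tail t_n lies in U, and c <= c^l for every c and l.
   2. Fusion: for every sequence (W_n) in U there are x0 in U and M with
      x0 /\ t_(M n) <= W_n.  Cut each a_i along the decreasing sequence
      V_n = W_0 /\ ... /\ W_(n-1); the non-zero pieces form a maximal antichain,
      the pieces lying below V_n have a join above V_n /\ t_n, which is in U,
      and coherence yields Y with x0 = \bigvee Y in U and Y almost included in
      every such family.
   3. Diagonal fusion: M can be replaced by a strictly increasing phi with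
      x /\ t_(phi m) <= W_(phi m), by cutting omega into blocks and letting U
      choose between the even and the odd blocks.
   4. For each level N, each assignment t : N -> N and each k < N choose, when
      possible, z in U with d_k </= g(s_t \/ z), where s_t = \bigvee_(i<N) a_i /\ d_(t i);
      the finite meet W_N of these witnesses is in U.  Applying 3 to (W_N) gives
      x and phi, and g*(c) = \bigwedge_l ghat(c^l), with ghat(v) = g(v /\ x) when
      v /\ x is in U, is the required basic map: g <= g* on U below x by
      monotonicity, and density of d together with the witnesses excludes
      g*(c) </= g(c) for c in C_phi. *)

Section IncreasingSequences.
Implicit Types (f : nat -> nat).

Lemma incr_ge_id f : (forall n, f n < f n.+1)%N -> forall n, (n <= f n)%N.
Proof. by move=> f_inc; elim=> // n IH; apply: leq_ltn_trans IH (f_inc n). Qed.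

Lemma block_unique f p q i : (forall n, f n < f n.+1)%N ->
  (f p <= i < f p.+1)%N -> (f q <= i < f q.+1)%N -> p = q.
Proof.
move=> f_inc /andP[pi ip] /andP[qi iq].
have f_le := homo_leq leqnn leq_trans (fun n => ltnW (f_inc n)).
case: (ltngtP p q) => // [pq|qp].
- by have := leq_trans (f_le _ _ pq) qi; rewrite leqNgt ip.
- by have := leq_trans (f_le _ _ qp) pi; rewrite leqNgt iq.
Qed.

Fixpoint blocks (M : nat -> nat) m :=
  if m is m'.+1 then maxn (M (blocks M m')) (blocks M m').+1 else 0%N.

Lemma blocks_lt M m : (blocks M m < blocks M m.+1)%N.
Proof. by rewrite /= leq_maxr. Qed.

Lemma blocks_M M m : (M (blocks M m) <= blocks M m.+1)%N.
Proof. by rewrite /= leq_maxl. Qed.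

End IncreasingSequences.

Section BooleanAlgebra.
Context {disp : Order.disp_t} {T : ctbDistrLatticeType disp}.
Implicit Types (x y z : T).

Lemma le_of_disjC x y : x `&` ~` y = \bot -> x <= y.
Proof. by move=> H; rewrite -[y]complK -disj_leC H. Qed.

Lemma disj_of_leC x y : x <= ~` y -> x `&` y = \bot.
Proof. by move=> H; apply/eqP; rewrite disj_leC. Qed.

Lemma disj_le_trans x y z : x <= y -> y `&` z = \bot -> x `&` z = \bot.
Proof. by move=> xy yz; apply/eqP; rewrite -lex0 -yz leI2. Qed.

End BooleanAlgebra.

Section CompleteBooleanAlgebra.
Context {disp : Order.disp_t} {T : ctbDistrLatticeType disp}.
Hypothesis hcomp : complete_BA (T := T).
Implicit Types (X : set T) (x u : T).

Lemma bsup_ub X x : X x -> x <= bsup X.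
Proof. by move=> Xx; apply: (xgetPex \bot (hcomp X)).1. Qed.

Lemma bsup_le X u : (forall x, X x -> x <= u) -> bsup X <= u.
Proof. by move=> H; apply: (xgetPex \bot (hcomp X)).2. Qed.

(* The meet of X is the join of its lower bounds. *)
Lemma binfP X : is_glb X (binf X).
Proof.
apply: xgetPex; exists (bsup [set u | forall x, X x -> u <= x]); split.
  by move=> x Xx; apply: bsup_le => u; apply.
by move=> u Hu; apply: bsup_ub.
Qed.

Lemma binf_lb X x : X x -> binf X <= x.
Proof. by move=> Xx; apply: (binfP X).1. Qed.

Lemma binf_ge X u : (forall x, X x -> u <= x) -> u <= binf X.
Proof. by move=> H; apply: (binfP X).2. Qed.

End CompleteBooleanAlgebra.

Section Ultrafilter.
Context {disp : Order.disp_t} {T : ctbDistrLatticeType disp}.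
Variable U : set T.
Hypothesis hU : ultrafilter U.
Implicit Types (x y z : T).

Lemma U_up x y : U x -> x <= y -> U y.
Proof. by case: hU => _ _ H _ _; apply: H. Qed.

Lemma U_meet x y : U x -> U y -> U (x `&` y).
Proof. by case: hU => _ _ _ H _; apply: H. Qed.

Lemma U_top : U \top.
Proof. by case: hU. Qed.

Lemma U_bot : ~ U \bot.
Proof. by case: hU. Qed.

Lemma U_compl x : U x \/ U (~` x).
Proof. by case: hU => _ _ _ _ H; apply: H. Qed.

Lemma U_prime y z : U (y `|` z) -> ~ U y -> U z.
Proof.
move=> Uyz Uy; case: (U_compl y) => // Uny.
by apply: (U_up (U_meet Uyz Uny)); rewrite meetUl meetxC join0x leIl.
Qed.

Lemma U_bigmeet I (r : seq I) (F : I -> T) : (forall i, U (F i)) -> U (\meet_(i <- r) F i).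
Proof. by move=> UF; apply: (big_ind U U_top U_meet) => i _. Qed.

End Ultrafilter.

Section Antichain.
Context {disp : Order.disp_t} {T : ctbDistrLatticeType disp}.
Hypothesis hcomp : complete_BA (T := T).
Variable a : nat -> T.
Hypothesis ainj : injective a.
Hypothesis amax : maximal_antichain [set a i | i in [set: nat]].
Implicit Types (x y c : T).

Lemma a_disj i j : i != j -> a i `&` a j = \bot.
Proof.
move=> ij; apply: amax.1.2; [by exists i | by exists j |].
by apply: contra ij => /eqP/ainj ->.
Qed.

Lemma eq0_of_traces x : (forall i, x `&` a i = \bot) -> x = \bot.
Proof.
move=> H; apply: contrapT => /eqP x0.
by have [_ [i _ <-]] := amax.2 x x0; rewrite H eqxx.
Qed.

Lemma le_of_traces x y : (forall i, x `&` a i <= y) -> x <= y.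
Proof.
move=> H; apply: le_of_disjC; apply: eq0_of_traces => i.
by apply/eqP; rewrite -lex0 -(meetxC y) meetAC lexI leIr andbT; apply: leIxl.
Qed.

Definition index_of p := xget 0%N [set i | p <= a i].

Lemma index_ofP p i : p != \bot -> p <= a i -> index_of p = i.
Proof.
move=> p0 pa; have pa' : p <= a (index_of p).
  by apply: (xgetPex 0%N (P := [set i | p <= a i])); exists i.
apply/eqP; apply: contraNT p0 => ne; by rewrite -lex0 -(a_disj ne) lexI pa' pa.
Qed.

Definition tail n := bsup [set a i | i in [set i | (n <= i)%N]].

Lemma a_le_tail i n : (n <= i)%N -> a i <= tail n.
Proof. by move=> ni; apply: bsup_ub => //; exists i. Qed.

Lemma tail_disj i n : (i < n)%N -> a i `&` tail n = \bot.
Proof.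
move=> i_n; rewrite meetC; apply: disj_of_leC; apply: bsup_le => // _ [j /= nj <-].
rewrite -disj_leC; apply/eqP; apply: a_disj.
by apply: contraTneq nj => ->; rewrite -ltnNge.
Qed.

Lemma tail_anti n m : (n <= m)%N -> tail m <= tail n.
Proof.
move=> nm; apply: bsup_le => // _ [j /= mj <-].
by apply: a_le_tail; apply: leq_trans mj.
Qed.

Lemma compl_tail_le n : ~` tail n <= \join_(i < n) a i.
Proof.
apply: le_of_traces => i; case: (ltnP i n) => [i_n | ni].
  by apply: leIxr; exact: (@joins_sup _ _ _ (Ordinal i_n) xpredT (fun i : 'I_n => a i) isT).
by rewrite meetC disj_of_leC ?le0x // complK a_le_tail.
Qed.

Lemma le_cup c l : c <= cup a c l.
Proof.
apply: le_of_traces => i; case: (ltnP i l) => [il | li].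
  apply: lexUl; rewrite meetC.
  exact: (@joins_sup _ _ _ (Ordinal il) xpredT (fun i : 'I_l => a i `&` c) isT).
by apply: lexUr; apply: leIxr; apply: a_le_tail.
Qed.

Lemma cup_mono c c' l : c <= c' -> cup a c l <= cup a c' l.
Proof.
move=> cc; apply: leU2 => //; apply: joins_le => i _.
apply: le_trans (@joins_sup _ _ _ i xpredT (fun i : 'I_l => a i `&` c') isT).
by rewrite leI2.
Qed.

Lemma tail_cut G N N' :
  (forall i, (N <= i < N')%N -> G `&` a i = \bot) -> G `&` tail N <= tail N'.
Proof.
move=> HG; apply: le_of_traces => i.
case: (ltnP i N) => [iN | Ni].
  by rewrite -meetA [tail N `&` _]meetC tail_disj // meetx0 le0x.
case: (ltnP i N') => [iN' | N'i]; last by apply: leIxr; apply: a_le_tail.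
by rewrite meetAC HG ?meet0x ?le0x //; apply/andP.
Qed.

End Antichain.

Section NonprincipalUltrafilter.
Context {disp : Order.disp_t} {T : ctbDistrLatticeType disp}.
Hypothesis hcomp : complete_BA (T := T).
Variable a : nat -> T.
Hypothesis ainj : injective a.
Hypothesis amax : maximal_antichain [set a i | i in [set: nat]].
Variable U : set T.
Hypothesis hcoh : coherent_P_ultrafilter U.
Hypothesis aU : forall i, ~ U (a i).
Let hU : ultrafilter U := hcoh.1.
Local Notation tail := (tail a).

(* U is prime and contains no a_i, hence no finite join of them. *)
Lemma initial_notU n : ~ U (\join_(i < n) a i).
Proof.
elim: n => [|n IH]; first by rewrite big_ord0; apply: U_bot.
by rewrite big_ord_recr => /(U_prime hU) /(_ IH); apply: aU.
Qed.

(* Every tail is in U: its complement lies below a finite join of a_i's. *)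
Lemma U_tail n : U (tail n).
Proof.
case: (U_compl hU (tail n)) => // Ut; exfalso.
exact: initial_notU (U_up hU Ut (compl_tail_le hcomp amax n)).
Qed.

Section Fusion.
Variable W : nat -> T.
Hypothesis UW : forall n, U (W n).

Fixpoint V n := if n is m.+1 then V m `&` W m else \top.

Lemma U_V n : U (V n).
Proof. by elim: n => [|n IH] /=; [exact: U_top | exact: U_meet]. Qed.

Lemma V_anti n m : (n <= m)%N -> V m <= V n.
Proof.
elim: m => [|m IH]; first by rewrite leqn0 => /eqP ->.
rewrite leq_eqVlt => /orP [/eqP -> // | nm].
by apply: le_trans (IH nm); rewrite /= leIl.
Qed.

Definition piece i j :=
  if (j < i)%N then a i `&` V j `&` ~` V j.+1 else a i `&` V i.

Lemma piece_a i j : piece i j <= a i.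
Proof. by rewrite /piece; case: ifP => _; rewrite ?leIxl // leIl. Qed.

Lemma piece_V i j : (j <= i)%N -> piece i j <= V j.
Proof.
rewrite /piece leq_eqVlt => /orP [/eqP -> | ji]; first by rewrite ltnn leIr.
by rewrite ji; apply: leIxl; apply: leIr.
Qed.

Lemma piece_disj i j j' : (j < j')%N -> (j' <= i)%N -> piece i j `&` piece i j' = \bot.
Proof.
move=> jj' j'i; have ji : (j < i)%N by apply: leq_trans jj' j'i.
apply: (@disj_le_trans _ _ _ (~` V j.+1)); first by rewrite /piece ji leIr.
rewrite meetC disj_of_leC // complK.
by apply: le_trans (piece_V j'i) _; apply: V_anti.
Qed.

Lemma eq0_of_pieces r i n : (n <= i)%N -> r <= a i -> r <= V n ->
  (forall j, (n <= j <= i)%N -> r `&` piece i j = \bot) -> r = \bot.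
Proof.
move=> ni ra rv H.
have step j : (n <= j < i)%N -> r <= V j -> r <= V j.+1.
  move=> /andP[nj ji] rj; apply: le_of_disjC.
  have := H j; rewrite nj (ltnW ji) /piece ji => /(_ isT) r_piece.
  have -> : r = r `&` (a i `&` V j) by rewrite meet_l // lexI ra rj.
  by rewrite -meetA r_piece.
have rVi : r <= V i.
  have r_below k : (n + k <= i)%N -> r <= V (n + k).
    elim: k => [|k IH]; first by rewrite addn0.
    by rewrite addnS => hk; apply: step; [rewrite leq_addr | apply: IH; apply: ltnW].
  by have := r_below (i - n)%N; rewrite subnKC //; apply.
have r_piece_i : r `&` piece i i = \bot by apply: H; rewrite ni leqnn.
by move: r_piece_i; rewrite /piece ltnn meet_l // lexI ra rVi.
Qed.

Definition pieces := [set p | exists i j, [/\ (j <= i)%N, p = piece i j & p != \bot]].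
Definition pieces_from n :=
  [set p | exists i j, [/\ (n <= j <= i)%N, p = piece i j & p != \bot]].

Lemma pieces_max : maximal_antichain pieces.
Proof.
split; first split.
- by move=> p [i [j [_ _ ?]]].
- move=> p q [i [j [ji -> _]]] [i' [j' [ji' -> _]]] pq.
  have [eii' | ii'] := eqVneq i i'; last first.
    apply: (disj_le_trans (piece_a _ _)); rewrite meetC.
    by apply: (disj_le_trans (piece_a _ _)); rewrite meetC a_disj.
  subst i'; case: (ltngtP j j') => [jj' | j'j | jj']; last by rewrite jj' eqxx in pq.
  + exact: piece_disj.
  + by rewrite meetC piece_disj.
- move=> b b0; have [_ [i _ <-] bai] := amax.2 b b0.
  have [[j [ji hj]] | nex] :=
    pselect (exists j, (j <= i)%N /\ (b `&` a i) `&` piece i j != \bot).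
    exists (piece i j); last by rewrite -meetA (meet_r (piece_a _ _)) in hj.
    by exists i, j; split => //; apply: contraNneq hj => ->; rewrite meetx0.
  exfalso; move/eqP: bai; apply; apply: (@eq0_of_pieces _ i 0) => //.
  - exact: leIr.
  - exact: lex1.
  - move=> j /= ji; apply: contrapT => /eqP hj; apply: nex; exists j.
    by split => //; apply/eqP.
Qed.

Lemma pieces_from_sub n : pieces_from n `<=` pieces.
Proof. by move=> p [i [j [/andP[_ ji] -> p0]]]; exists i, j. Qed.

Lemma pieces_from_V n p : pieces_from n p -> p <= V n.
Proof.
move=> [i [j [/andP[nj ji] -> _]]].
by apply: le_trans (piece_V ji) _; apply: V_anti.
Qed.

(* The pieces below V_n cover V_n /\ t_n, hence their join is in U. *)
Lemma U_pieces_from n : U (bsup (pieces_from n)).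
Proof.
apply: (U_up hU (U_meet hU (U_V n) (U_tail n))); apply: (le_of_traces amax) => i.
case: (ltnP i n) => [i_n | ni].
  by rewrite -meetA [tail n `&` _]meetC tail_disj // meetx0 le0x.
apply: le_of_disjC; apply: (@eq0_of_pieces _ i n) => //.
- by apply: leIxl; apply: leIr.
- by apply: leIxl; apply: leIxl; apply: leIl.
move=> j nji; have [-> | p0] := eqVneq (piece i j) \bot; first by rewrite meetx0.
rewrite meetC; apply: (disj_le_trans (y := bsup (pieces_from n))).
  by apply: bsup_ub => //; exists i, j.
by rewrite meetC; apply: disj_of_leC; rewrite leIr.
Qed.

Lemma fusion : exists x0 (M : nat -> nat), U x0 /\ forall n, x0 `&` tail (M n) <= W n.
Proof.
have [Y [YP UY] Yfin] :=
  hcoh.2 pieces pieces_from pieces_max pieces_from_sub U_pieces_from.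
exists (bsup Y).
suff H n : exists M, bsup Y `&` tail M <= V n.+1.
  have [M HM] := choice H; exists M; split => // n.
  by apply: le_trans (HM n) _; rewrite /= leIr.
(* the finitely many elements of Y outside pieces_from n.+1 lie below a_i, i < M *)
have [s Hs] := (finite_seqP _).1 (Yfin n.+1).
pose M := \big[maxn/0%N]_(p <- s) (index_of a p).+1.
exists M.
suff HY : bsup Y <= ~` tail M `|` V n.+1.
  by apply: le_trans (leI2 HY (lexx (tail M))) _; rewrite meetUl meetCx join0x leIl.
apply: bsup_le => // p Yp; have [i [j [ji pE p0]]] := YP p Yp.
have pa : p <= a i by rewrite pE piece_a.
case: (ltnP i M) => [iM | Mi].
  by apply: lexUl; apply: le_trans pa _; rewrite -disj_leC tail_disj.
apply: lexUr; apply: pieces_from_V; apply: contrapT => nX.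
have ps : p \in s by have : [set` s] p by rewrite -Hs.
have := @leq_bigmax_seq _ s xpredT (fun p => (index_of a p).+1) p ps isT.
by rewrite -/M (index_ofP ainj amax p0 pa) ltnNge Mi.
Qed.

End Fusion.

Lemma U_avoids_alternate_blocks (b : nat -> nat) : (forall n, b n < b n.+1)%N ->
  exists G q, U G /\ forall m i, (b (2 * m + q) <= i < b (2 * m + q).+1)%N ->
    G `&` a i = \bot.
Proof.
move=> b_inc; pose E := [set i | exists m, (b (2 * m) <= i < b (2 * m).+1)%N].
pose AE := bsup [set a i | i in E].
case: (U_compl hU AE) => UA; [exists AE, 1%N | exists (~` AE), 0%N]; split => // m i hi.
- apply: disj_of_leC; apply: bsup_le => // _ [j [m' hj] <-].
  rewrite -disj_leC; apply/eqP; apply: (a_disj ainj amax); apply/eqP => ji.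
  subst j; have := block_unique b_inc hj hi.
  by move/(congr1 odd); rewrite oddD !oddM.
- rewrite meetC; apply: disj_of_leC; rewrite complK; apply: bsup_ub => //; exists i => //.
  by exists m; rewrite addn0 in hi.
Qed.

Lemma diagonal_fusion (W : nat -> T) : (forall n, U (W n)) ->
  exists x phi, [/\ U x, (forall n, phi n < phi n.+1)%N &
    forall m, x `&` tail (phi m) <= W (phi m)].
Proof.
move=> UW; have [x0 [M [Ux0 HM]]] := fusion UW.
pose b := blocks M.
have b_inc n : (b n < b n.+1)%N by apply: blocks_lt.
have [G [q [UG HG]]] := U_avoids_alternate_blocks b_inc.
exists (x0 `&` G), (fun m => b (2 * m + q)); split.
- exact: U_meet.
- move=> n; rewrite mulnS -addnA addSn add1n.
  exact: ltn_trans (b_inc _) (b_inc _).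
move=> m; set N := b (2 * m + q).
have cut : G `&` tail N <= tail (b (2 * m + q).+1).
  by apply: (tail_cut hcomp ainj amax); apply: HG.
apply: le_trans (HM N); rewrite -meetA leI2 //.
by apply: le_trans cut _; apply: (tail_anti hcomp); apply: blocks_M.
Qed.

End NonprincipalUltrafilter.

Section BasicMap.
Context {disp : Order.disp_t} {T : ctbDistrLatticeType disp}.
Hypothesis hcomp : complete_BA (T := T).
Variables (a : nat -> T) (U : set T) (g : T -> T).
Hypothesis amax : maximal_antichain [set a i | i in [set: nat]].
Hypothesis hU : ultrafilter U.
Hypothesis hg : monotonic_on U g.

Definition ghat x v := if pselect (U (v `&` x)) then g (v `&` x) else \bot.

Lemma ghatE x v : U (v `&` x) -> ghat x v = g (v `&` x).
Proof. by rewrite /ghat; case: pselect. Qed.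

Lemma ghat_mono x v v' : v <= v' -> ghat x v <= ghat x v'.
Proof.
move=> vv; rewrite /ghat; destruct (pselect (U (v `&` x))) as [Uv | nUv]; last exact: le0x.
have Uv' : U (v' `&` x) by apply: (U_up hU Uv); rewrite leI2.
by destruct (pselect (U (v' `&` x))); [apply: hg => //; rewrite leI2 |].
Qed.

Definition gstar x c := binf [set ghat x (cup a c l) | l in [set: nat]].

Lemma gstar_le_ghat x c l : gstar x c <= ghat x (cup a c l).
Proof. by apply: binf_lb => //; exists l. Qed.

Lemma gstar_mono x c c' : c <= c' -> gstar x c <= gstar x c'.
Proof.
move=> cc; apply: binf_ge => // _ [l _ <-].
by apply: le_trans (gstar_le_ghat x c l) _; apply: ghat_mono; apply: cup_mono.
Qed.

(* Monotonicity of g gives g <= g* on the elements of U below x. *)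
Lemma g_le_gstar x c : U c -> c <= x -> g c <= gstar x c.
Proof.
move=> Uc cx; apply: binf_ge => // _ [l _ <-].
have cl : c <= cup a c l `&` x by rewrite lexI (le_cup hcomp amax) cx.
have Ucl := U_up hU Uc cl.
by rewrite ghatE //; apply: hg.
Qed.

End BasicMap.

Section Agreement.
Context {disp : Order.disp_t} {T : ctbDistrLatticeType disp}.
Hypothesis hcomp : complete_BA (T := T).
Variables (d a : nat -> T) (U : set T) (g : T -> T).
Hypothesis amax : maximal_antichain [set a i | i in [set: nat]].
Hypothesis hd : dense_enum d.
Hypothesis hU : ultrafilter U.
Hypothesis hg : monotonic_on U g.

(* The candidate \bigvee_(i<N) a_i /\ d_(t i) for the part of an element
   below a_0 \/ ... \/ a_(N-1). *)
Definition approx N (t : {ffun 'I_N -> 'I_N}) := \join_(i < N) (a i `&` d (t i)).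

Definition witness N (t : {ffun 'I_N -> 'I_N}) (k : 'I_N) :=
  xget \top [set z | U z /\ ~ (d k <= g (approx t `|` z))].

Lemma witness_spec N (t : {ffun 'I_N -> 'I_N}) (k : 'I_N) :
  (exists z, U z /\ ~ (d k <= g (approx t `|` z))) ->
  U (witness t k) /\ ~ (d k <= g (approx t `|` witness t k)).
Proof. exact: xgetPex. Qed.

Lemma U_witness N (t : {ffun 'I_N -> 'I_N}) (k : 'I_N) : U (witness t k).
Proof.
have [ex | nex] := pselect (exists z, U z /\ ~ (d k <= g (approx t `|` z))).
  exact: (witness_spec ex).1.
by rewrite /witness xgetPN; [exact: U_top | move=> z hz; apply: nex; exists z].
Qed.

Definition Wit N := \meet_(t : {ffun 'I_N -> 'I_N}) \meet_(k : 'I_N) witness t k.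

Lemma U_Wit N : U (Wit N).
Proof. by do 2!apply: (U_bigmeet hU) => ?; apply: U_witness. Qed.

Lemma Wit_le N (t : {ffun 'I_N -> 'I_N}) (k : 'I_N) : Wit N <= witness t k.
Proof.
apply: le_trans (@meets_inf _ _ _ t xpredT (fun t => \meet_(k : 'I_N) witness t k) isT) _.
exact: (@meets_inf _ _ _ k xpredT (fun k => witness t k) isT).
Qed.

Lemma C_phi_levels phi c : (forall n, phi n < phi n.+1)%N -> C_phi d a phi c ->
  forall k, exists m (t : {ffun 'I_(phi m) -> 'I_(phi m)}),
    [/\ (k < phi m)%N, cup a c (phi m) = approx t `|` tail a (phi m) & approx t <= c].
Proof.
move=> phi_inc [mm [mm_inc Hpat]] k; exists (mm k.+1); set N := phi (mm k.+1).
have pattern (i : 'I_N) : exists t : 'I_N, d t = a i `&` c.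
  by have [t tN e] := Hpat k.+1 i (ltn_ord i); exists (Ordinal tN).
have [u hu] := fin_all_exists pattern.
exists [ffun i => u i].
have approxE : approx [ffun i => u i] = \join_(i < N) (a i `&` c).
  by apply: eq_bigr => i _; rewrite ffunE hu meetA meetxx.
rewrite approxE; split => //.
- exact: leq_trans (incr_ge_id mm_inc _) (incr_ge_id phi_inc _).
- by apply: joins_le => i _; apply: leIr.
Qed.

(* If x sits below the witnesses of every level phi m, then g* <= g on C_phi:
   otherwise some d_k > 0 lies below g*(c) but not below g(c), and the witness
   for the indices describing c at a level phi m > k contradicts d_k <= g*(c). *)
Lemma gstar_le_g x phi c : (forall n, phi n < phi n.+1)%N ->
  (forall m, x `&` tail a (phi m) <= Wit (phi m)) ->
  C_phi d a phi c -> U c -> c <= x -> gstar a U g x c <= g c.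
Proof.
move=> phi_inc hx Cc Uc cx; apply: le_of_disjC; apply: contrapT => /eqP w0.
have [k /andP[k_gt0 k_le]] := hd w0.
have [m [t [kN cupE tc]]] := C_phi_levels phi_inc Cc k.
pose kk : 'I_(phi m) := Ordinal kN.
have dk_notle : ~ d kk <= g c.
  move=> dk_le; have : d k <= \bot.
    by rewrite -(meetxC (g c)) lexI dk_le (le_trans k_le (leIr _ _)).
  by rewrite (lt_geF k_gt0).
have [Uz hz] : U (witness t kk) /\ ~ d kk <= g (approx t `|` witness t kk).
  by apply: witness_spec; exists c; rewrite join_r.
apply: hz; apply: le_trans k_le _; apply: le_trans (leIl _ _) _.
apply: le_trans (gstar_le_ghat hcomp a U g x c (phi m)) _.
have Ucx : U (cup a c (phi m) `&` x).
  by apply: (U_up hU Uc); rewrite lexI (le_cup hcomp amax) cx.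
rewrite ghatE //; apply: hg => //; first by apply: (U_up hU Uz); apply: leUr.
rewrite cupE meetUl; apply: leU2; first exact: leIl.
by rewrite meetC; apply: le_trans (hx m) (Wit_le _ _).
Qed.

End Agreement.

Theorem mainTheorem12 (disp : Order.disp_t) (T : ctbDistrLatticeType disp)
  (d a : nat -> T) (U : set T) (g : T -> T) :
  complete_BA (T := T) -> atomless_BA (T := T) ->
  subalgebra_enum d -> dense_enum d -> d 0%N = \bot ->
  injective a -> maximal_antichain [set a i | i in [set: nat]] ->
  coherent_P_ultrafilter U ->
  (forall i, ~ U (a i)) ->
  monotonic_on U g ->
  exists x : T, exists phi : nat -> nat, exists gs : T -> T,
    [/\ U x, (forall n, (phi n < phi n.+1)%N),
        monotonic_on (C_phi d a phi) gs,
        basic_rep a (C_phi d a phi) gs &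
        forall c, C_phi d a phi c -> U c -> c <= x -> gs c = g c].
Proof.
move=> hcomp _ _ hd _ ainj amax hcoh aU hg; have hU := hcoh.1.
have [x [phi [Ux phi_inc hx]]] :=
  diagonal_fusion hcomp ainj amax hcoh aU (U_Wit d a g hU).
exists x, phi, (gstar a U g x); split => //.
- by move=> c c' _ _; apply: gstar_mono.
- by exists (ghat U g x).
- move=> c Cc Uc cx; apply: le_anti.
  rewrite (gstar_le_g hcomp amax hd hU hg phi_inc hx Cc Uc cx).
  exact: (g_le_gstar hcomp amax hU hg Uc cx).
Qed.
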